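(* Let $\Lambda=kQ/I(n;n',n'';V)$ with $m=\min(n',n'')$, $d=\dim_kV/(\beta^m)$, and suppose $V$ is an ideal of $k[\beta]$, i.e. $V=(\beta^{m-d})$, and that $\delta=\gcd(n,n',n'')$ divides $d$. Then $$\dim_k\mathrm{HH}^1(\Lambda)=(n-1)+(m-1)+c>0.$$ In particular, if $m=1$ then $\dim_k\mathrm{HH}^1(\Lambda)=n-1$.
   Context: $k$ is a field; $Q$ is the quiver with vertices $1,2,3$ and arrows $\alpha\colon 2\to1$, $\beta\colon 2\to 2$, $\gamma\colon 3\to 2$; $kQ$ is generated by pairwise orthogonal idempotents $e_1,e_2,e_3$ (sum $1$) and $\alpha,\beta,\gamma$ with $e_1\alpha=\alpha=\alpha e_2$, $e_2\beta=\beta=\beta e_2$, $e_3\gamma=\gamma=\gamma e_2$, $\gamma\alpha=\beta\alpha=\gamma\beta=0$; for $v=\sum_iv_i\beta^i\in k[\beta]$, $\alpha v\gamma=\sum_iv_i\alpha\beta^i\gamma$. For integers $n\ge 2$, $1\le n',n''\le n$, $m=\min(n',n'')$ and a $k$-subspace $V\subseteq k[\beta]$ containing $(\beta^m)$, $I(n;n',n'';V)$ is the two-sided ideal of $kQ$ generated by $\alpha\beta^{n'}$, $\beta^n$, $\beta^{n''}\gamma$ and all $\alpha v\gamma$, $v\in V$. $c=1$ if $\delta=0$ in $k$ and $c=0$ otherwise. $\mathrm{HH}^1(\Lambda)=\mathrm{Der}_k(\Lambda,\Lambda)/\mathrm{Inn}(\Lambda)$. *)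

From HB Require Import structures.
From mathcomp Require Import all_boot all_order all_algebra.
Set Implicit Arguments. Unset Strict Implicit. Unset Printing Implicit Defensive.
Import GRing.Theory.
Local Open Scope ring_scope.

(* Vertices 1,2,3 are the indices 0,1,2.
   Ambient type: 3x3 matrices over k[x]; the path algebra kQ is the set of
   matrices  [[a1, q, s], [0, p, r], [0, 0, a3]]  with a1,a3 constants, which
   stands for  a1 e1 + a3 e3 + p(beta) + alpha q(beta) + r(beta) gamma
   + alpha s(beta) gamma  (the k-span of the paths e1,e2,e3, beta^i,
   alpha beta^i, beta^i gamma, alpha beta^i gamma).  Multiplication of paths
   is matrix multiplication (target vertex = row index). *)
Section PathAlg.
Variable k : fieldType.

Definition Mat := 'M[{poly k}]_3.

Definition i0 : 'I_3 := @Ordinal 3 0 isT.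
Definition i1 : 'I_3 := @Ordinal 3 1 isT.
Definition i2 : 'I_3 := @Ordinal 3 2 isT.

Definition kscale (c : k) (x : Mat) : Mat := c%:P *: x.

Definition e1 : Mat := delta_mx i0 i0.
Definition e2 : Mat := delta_mx i1 i1.
Definition e3 : Mat := delta_mx i2 i2.
Definition alpha : Mat := delta_mx i0 i1.            (* 2 -> 1 *)
Definition beta  : Mat := 'X *: delta_mx i1 i1.
Definition gamma : Mat := delta_mx i1 i2.            (* 3 -> 2 *)

Definition kQ (x : Mat) : Prop :=
  [/\ x i1 i0 = 0, x i2 i0 = 0, x i2 i1 = 0,
      (size (x i0 i0) <= 1)%N & (size (x i2 i2) <= 1)%N].

(* alpha v gamma = sum_i v_i alpha beta^i gamma, for v in k[beta] *)
Definition avg (v : {poly k}) : Mat :=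
  \sum_(i < size v) kscale v`_i (alpha * beta ^+ i * gamma).

Definition ideal_gen (S : Mat -> Prop) (x : Mat) : Prop :=
  exists (N : nat) (a g b : 'I_N -> Mat),
    (forall j, [/\ kQ (a j), S (g j) & kQ (b j)]) /\
    x = \sum_(j < N) a j * g j * b j.

Definition gensI (n n' n'' : nat) (V : {poly k} -> Prop) (g : Mat) : Prop :=
  [\/ g = alpha * beta ^+ n', g = beta ^+ n, g = beta ^+ n'' * gamma
    | exists v, V v /\ g = avg v].

Definition I_ideal n n' n'' V := ideal_gen (gensI n n' n'' V).

(* A k-linear endomorphism of Lambda is represented by a
   k-linear map f on kQ with f(I) <= I (every linear map of the quotient lifts);
   two lifts represent the same map iff they differ by a map into I. *)
Variable I : Mat -> Prop.

Definition klinear_on_kQ (f : Mat -> Mat) : Prop :=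
  forall (c : k) x y, kQ x -> kQ y -> f (kscale c x + y) = kscale c (f x) + f y.

Definition is_der (f : Mat -> Mat) : Prop :=
  [/\ klinear_on_kQ f,
      (forall x, kQ x -> kQ (f x)),
      (forall x, I x -> I (f x)) &
      (forall x y, kQ x -> kQ y -> I (f (x * y) - (f x * y + x * f y)))].

Definition is_inner (f : Mat -> Mat) : Prop :=
  exists z, kQ z /\ forall x, kQ x -> I (f x - (z * x - x * z)).

Definition lincomb N (c : 'I_N -> k) (D : 'I_N -> Mat -> Mat) (x : Mat) : Mat :=
  \sum_(i < N) kscale (c i) (D i x).

(* dim_k HH^1(Lambda) = dim_k Der(Lambda)/Inn(Lambda) = N : there are N
   derivations whose classes form a basis of Der/Inn. *)
Definition dimHH1 (N : nat) : Prop :=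
  exists D : 'I_N -> Mat -> Mat,
    [/\ forall i, is_der (D i),
        (forall c : 'I_N -> k, is_inner (lincomb c D) -> forall i, c i = 0) &
        (forall f, is_der f -> exists c : 'I_N -> k,
             is_inner (fun x => f x - lincomb c D x))].
End PathAlg.

From HB Require Import structures.
From mathcomp Require Import all_boot all_order all_algebra.
From mathcomp Require Import ring zify.
From Stdlib Require Import FunctionalExtensionality PropExtensionality.
Set Implicit Arguments. Unset Strict Implicit. Unset Printing Implicit Defensive.
Import GRing.Theory.
Local Open Scope ring_scope.

(* Write an element of kQ as a1 e1 + a3 e3 + p(beta) + alpha q(beta)
   + r(beta) gamma + alpha s(beta) gamma.  Then I consists of the elements with
   a1 = a3 = 0, beta^n' | q, beta^(m-d) | s, beta^n | p and beta^n'' | r.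
   After subtracting the inner derivation by sum_i D(e_i) e_i, a derivation D
   kills the idempotents modulo I, so modulo I it is the derivation D(u, w, v)
   with alpha |-> alpha u(beta), beta |-> w(beta), gamma |-> v(beta) gamma.
   Commutators with c e1 + mu(beta) shift u and v by opposite amounts, and
   D(u, w, v) is inner exactly when beta^n | w and u + v is constant modulo
   beta^m.  Hence HH^1 has the basis beta |-> beta^(i+1) (i < n - 1),
   alpha |-> alpha beta^(j+1) (j < m - 1), plus beta |-> e2 when it preserves
   I.  Stability of I under D(u, w, v) forces w(0) n = w(0) n' = w(0) n'' = 0,
   so a constant term survives only if delta = 0 in k; conversely n, n', n''
   and, as delta | d, also m - d then vanish in k, and beta |-> e2 preserves I. *)

Lemma commr_mul (R : pzRingType) (z x y : R) :
  z * (x * y) - x * y * z = (z * x - x * z) * y + x * (z * y - y * z).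
Proof. by rewrite mulrBl mulrBr !mulrA addrA subrK. Qed.

Lemma leibniz_defectB (R : pzRingType) (x y Fxy Fx Fy Gx Gy : R) :
  Fxy - (Gx * y + x * Gy) - ((Fx - Gx) * y + x * (Fy - Gy)) =
  Fxy - (Fx * y + x * Fy).
Proof. by rewrite mulrBl mulrBr addrACA -opprD opprB -addrA addKr. Qed.

Lemma scale_addrB (R : pzRingType) (V : lmodType R) (c : R) (a b a' b' : V) :
  (c *: a + b) - (c *: a' + b') = c *: (a - a') + (b - b').
Proof. by rewrite opprD addrACA scalerBr. Qed.

Lemma mulrn_gcdn_eq0 (V : zmodType) (x : V) a b :
  x *+ a = 0 -> x *+ b = 0 -> x *+ gcdn a b = 0.
Proof.
case: (posnP a) => [-> _ | a_gt0 ha hb]; first by rewrite gcd0n.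
have [u _ /dvdnP [t /(congr1 (fun j => x *+ j))]] := Bezoutl b a_gt0.
by rewrite mulrnDr (mulnC u) (mulnC t) !mulrnA ha hb !mul0rn addr0.
Qed.

Lemma dvdn_gcdn3_minn a b c : (gcdn (gcdn a b) c %| minn b c)%N.
Proof.
rewrite /minn; case: ifP => _; first exact: dvdn_trans (dvdn_gcdl _ _) (dvdn_gcdr _ _).
exact: dvdn_gcdr.
Qed.

Section PolyFacts.
Variable k : fieldType.
Local Notation P := {poly k}.

Lemma dvdXnP j (p : P) : 'X^j %| p <-> forall i, (i < j)%N -> p`_i = 0.
Proof.
split=> [/dvdpP [t ->] i hij | h]; first by rewrite coefMXn hij.
rewrite -(poly_take_drop j p) (_ : take_poly j p = 0) ?add0r ?dvdp_mull //.
by apply/polyP => i; rewrite coef_take_poly coef0; case: ifP => // /h.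
Qed.

Lemma dvdp_eqr (d p q : P) : d %| p -> p = q -> d %| q.
Proof. by move=> ? <-. Qed.

Lemma dvdXn_leq i j (p : P) : (i <= j)%N -> 'X^j %| p -> 'X^i %| p.
Proof. by move=> hij; apply: dvdp_trans; apply: dvdp_exp2l. Qed.

(* A derivative loses one power of X, which [w] restores unless the
   exponent vanishes in k. *)
Lemma dvdXn_deriv_mul j (s w : P) :
  'X^j %| s -> 'X %| w \/ (j%:R : k) = 0 -> 'X^j %| s^`() * w.
Proof.
case/dvdpP => t -> hw; rewrite derivM derivXn mulrDl.
apply: dvdp_add; first by apply/dvdp_mulr/dvdp_mull.
case: hw => [/dvdpP [w1 ->] | hj].
  case: j => [|j]; first by rewrite mulr0n mulr0 mul0r dvdp0.
  rewrite (_ : _ * _ = ((t * w1) *+ j.+1) * 'X^(j.+1)) ?dvdp_mull //.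
  by rewrite /= exprS -mulr_natr -(mulr_natr (t * w1)); move: (_%:R) => N; ring.
by rewrite -mulr_natr -polyC_natr hj ?polyC0 !mulr0 mul0r dvdp0.
Qed.

Lemma coef_derivXn_mul j (p : P) : (0 < j)%N -> ('X^j^`() * p)`_j.-1 = p`_0 *+ j.
Proof. by move=> hj; rewrite derivXn mulrnAl coefMn coefXnM ltnn subnn. Qed.

Lemma dvdXn_minn_split i j (p : P) : 'X^(minn i j) %| p ->
  exists p1 p2, [/\ p = p1 + p2, 'X^i %| p1 & 'X^j %| p2].
Proof.
case: (leqP i j) => hij hp.
  by exists p, 0; split; rewrite ?addr0 ?dvdp0 // -(minn_idPl hij).
by exists 0, p; split; rewrite ?add0r ?dvdp0 // -(minn_idPr (ltnW hij)).
Qed.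

Lemma coef_sum_XS j (c : 'I_j -> k) (l : 'I_j) :
  (\sum_(i < j) c i *: 'X^(i.+1) : P)`_l.+1 = c l.
Proof.
rewrite coef_sum (bigD1 l) //= big1 => [|i /negPf ne_il].
  by rewrite coefZ coefXn eqxx mulr1 addr0.
by rewrite coefZ coefXn eqSS eq_sym -[(i : nat) == l]/(i == l) ne_il mulr0.
Qed.

Lemma coef0_sum_XS j (c : 'I_j -> k) : (\sum_(i < j) c i *: 'X^(i.+1) : P)`_0 = 0.
Proof. by rewrite coef_sum big1 // => i _; rewrite coefZ coefXn mulr0. Qed.

End PolyFacts.

Lemma sum_ord_le1 (V : zmodType) j (F : 'I_j -> V) (t : 'I_j) :
  (j <= 1)%N -> \sum_(i < j) F i = F t.
Proof.
case: j F t => [|[|//]] F [[|//] ?] _ //.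
by rewrite big_ord1; congr F; apply: val_inj.
Qed.

Lemma ord_add3_ind p q r (Pr : 'I_(p + q + r) -> Prop) :
  (forall l, Pr (lshift r (lshift q l))) -> (forall l, Pr (lshift r (rshift p l))) ->
  (forall t, Pr (rshift (p + q) t)) -> forall i, Pr i.
Proof.
move=> Hl Hm Ht i; rewrite -(splitK i); case: (split i) => [j|t] //=.
by rewrite -(splitK j); case: (split j).
Qed.

Section Coordinates.
Variable k : fieldType.
Local Notation M := (Mat k).
Local Notation P := {poly k}.

Definition pmx (a1 q s p r a3 : P) : M :=
  \matrix_(i < 3, j < 3)
    match nat_of_ord i, nat_of_ord j with
    | 0, 0 => a1 | 0, 1 => q | 0, 2 => s | 1, 1 => p | 1, 2 => r | 2, 2 => a3
    | _, _ => 0 end.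

Local Ltac pmx_ext :=
  apply/matrixP; case=> [[|[|[|?]]] ?]; case=> [[|[|[|?]]] ?]; rewrite ?mxE //=.

Lemma pmx_mul a1 q s p r a3 b1 q' s' p' r' b3 :
  pmx a1 q s p r a3 * pmx b1 q' s' p' r' b3 =
  pmx (a1 * b1) (a1 * q' + q * p') (a1 * s' + q * r' + s * b3) (p * p')
      (p * r' + r * b3) (a3 * b3).
Proof.
apply/matrixP => i j; rewrite -mulmxE !mxE !big_ord_recr big_ord0 /= !mxE.
case: i => [[|[|[|i]]] ?] //=; case: j => [[|[|[|j]]] ?] //=;
  by rewrite ?mul0r ?mulr0 ?add0r ?addr0.
Qed.

Lemma pmx_add a1 q s p r a3 b1 q' s' p' r' b3 :
  pmx a1 q s p r a3 + pmx b1 q' s' p' r' b3 =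
  pmx (a1 + b1) (q + q') (s + s') (p + p') (r + r') (a3 + b3).
Proof. by pmx_ext; rewrite addr0. Qed.

Lemma pmx_opp a1 q s p r a3 :
  - pmx a1 q s p r a3 = pmx (- a1) (- q) (- s) (- p) (- r) (- a3).
Proof. by pmx_ext; rewrite oppr0. Qed.

Lemma pmx_sub a1 q s p r a3 b1 q' s' p' r' b3 :
  pmx a1 q s p r a3 - pmx b1 q' s' p' r' b3 =
  pmx (a1 - b1) (q - q') (s - s') (p - p') (r - r') (a3 - b3).
Proof. by rewrite pmx_opp pmx_add. Qed.

Lemma pmx_scale c a1 q s p r a3 :
  kscale c (pmx a1 q s p r a3) =
  pmx (c%:P * a1) (c%:P * q) (c%:P * s) (c%:P * p) (c%:P * r) (c%:P * a3).
Proof. by rewrite /kscale; pmx_ext; rewrite mulr0. Qed.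

Lemma pmx0 : pmx 0 0 0 0 0 0 = 0.
Proof. by pmx_ext; rewrite mxE. Qed.

Lemma pmx1 : pmx 1 0 0 1 0 1 = 1.
Proof. by pmx_ext; rewrite mxE. Qed.

Lemma pmx_inj a1 q s p r a3 b1 q' s' p' r' b3 :
  pmx a1 q s p r a3 = pmx b1 q' s' p' r' b3 ->
  [/\ a1 = b1, q = q', s = s', p = p' & r = r' /\ a3 = b3].
Proof.
move=> E; have Eij i j := congr1 (fun x : M => x i j) E.
move: (Eij i0 i0) (Eij i0 i1) (Eij i0 i2) (Eij i1 i1) (Eij i1 i2) (Eij i2 i2).
by rewrite !mxE /= => -> -> -> -> -> ->.
Qed.

Lemma e1E : e1 k = pmx 1 0 0 0 0 0. Proof. by rewrite /e1; pmx_ext. Qed.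
Lemma e2E : e2 k = pmx 0 0 0 1 0 0. Proof. by rewrite /e2; pmx_ext. Qed.
Lemma e3E : e3 k = pmx 0 0 0 0 0 1. Proof. by rewrite /e3; pmx_ext. Qed.
Lemma alphaE : alpha k = pmx 0 1 0 0 0 0. Proof. by rewrite /alpha; pmx_ext. Qed.
Lemma betaE : beta k = pmx 0 0 0 'X 0 0.
Proof. by rewrite /beta; pmx_ext; rewrite ?mulr1 ?mulr0. Qed.
Lemma gammaE : gamma k = pmx 0 0 0 0 1 0. Proof. by rewrite /gamma; pmx_ext. Qed.

End Coordinates.

Ltac pmx_ring :=
  rewrite ?e1E ?e2E ?e3E ?alphaE ?betaE ?gammaE -?pmx0
          !(pmx_mul, pmx_scale, pmx_opp, pmx_add); congr pmx; ring.

Section PathAlgebra.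
Variable k : fieldType.
Local Notation M := (Mat k).
Local Notation P := {poly k}.
Local Notation pmx := (@pmx k).

Lemma idempotent_mul (i j : 'I_3) :
  delta_mx i i * delta_mx j j = (if i == j then delta_mx i i else 0) :> M.
Proof.
by rewrite -mulmxE mul_delta_mx_cond; case: eqP => [->|_]; rewrite ?mulr1n ?mulr0n.
Qed.

Lemma e1_alpha : e1 k * alpha k = alpha k. Proof. by pmx_ring. Qed.
Lemma alpha_e2 : alpha k * e2 k = alpha k. Proof. by pmx_ring. Qed.
Lemma e2_beta : e2 k * beta k = beta k. Proof. by pmx_ring. Qed.
Lemma beta_e2 : beta k * e2 k = beta k. Proof. by pmx_ring. Qed.
Lemma e2_gamma : e2 k * gamma k = gamma k. Proof. by pmx_ring. Qed.
Lemma gamma_e3 : gamma k * e3 k = gamma k. Proof. by pmx_ring. Qed.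

Lemma beta_expE j : (0 < j)%N -> beta k ^+ j = pmx 0 0 0 'X^j 0 0.
Proof.
case: j => // j _; elim: j => [|j IH]; first by rewrite betaE.
by rewrite exprS IH [in RHS]exprS; pmx_ring.
Qed.

Lemma alpha_beta_expE j : alpha k * beta k ^+ j = pmx 0 'X^j 0 0 0 0.
Proof.
elim: j => [|j IH]; first by rewrite expr0 mulr1 alphaE.
by rewrite exprSr mulrA IH [in RHS]exprSr; pmx_ring.
Qed.

Lemma avgE v : avg v = pmx 0 0 v 0 0 0.
Proof.
rewrite /avg (eq_bigr (fun i : 'I_(size v) => pmx 0 0 (v`_i *: 'X^i) 0 0 0)); last first.
  by move=> i _; rewrite alpha_beta_expE -mul_polyC; pmx_ring.
have pmxD : {morph (fun s => pmx 0 0 s 0 0 0) : s s' / s + s'}.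
  by move=> s s'; rewrite pmx_add !addr0.
by rewrite -(big_morph _ pmxD (pmx0 k)) -poly_def coefK.
Qed.

Lemma kQ_pmxC (a1 a3 : k) q s p r : kQ (pmx a1%:P q s p r a3%:P).
Proof. by rewrite /kQ !mxE /= !size_polyC !leq_b1. Qed.

Lemma kQ_pmx (x : M) : kQ x ->
  x = pmx ((x i0 i0)`_0)%:P (x i0 i1) (x i0 i2) (x i1 i1) (x i1 i2) ((x i2 i2)`_0)%:P.
Proof.
case=> h10 h20 h21 /size1_polyC <- /size1_polyC <-.
apply/matrixP => i j; rewrite mxE.
case: i => [[|[|[|i]]] Hi] //=; case: j => [[|[|[|j]]] Hj] //=;
  first [ by congr (x _ _); apply: val_inj
        | by rewrite -h10; congr (x _ _); apply: val_inj
        | by rewrite -h20; congr (x _ _); apply: val_inj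
        | by rewrite -h21; congr (x _ _); apply: val_inj ].
Qed.

Lemma kQP (x : M) : kQ x -> exists a1 a3 q s p r, x = pmx a1%:P q s p r a3%:P.
Proof. by move/kQ_pmx ->; do 6 eexists. Qed.

Lemma kQ_mul (x y : M) : kQ x -> kQ y -> kQ (x * y).
Proof. by move=> /kQ_pmx -> /kQ_pmx ->; rewrite pmx_mul -!polyCM; exact: kQ_pmxC. Qed.

Lemma kQ_lin c (x y : M) : kQ x -> kQ y -> kQ (kscale c x + y).
Proof.
by move=> /kQ_pmx -> /kQ_pmx ->; rewrite pmx_scale pmx_add -!polyCM -!polyCD; exact: kQ_pmxC.
Qed.

Lemma kscale1 (x : M) : kscale 1 x = x.
Proof. by rewrite /kscale scale1r. Qed.

Lemma kQ_add (x y : M) : kQ x -> kQ y -> kQ (x + y).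
Proof. by move=> hx hy; rewrite -(kscale1 x); apply: kQ_lin. Qed.

Lemma kQ_sub (x y : M) : kQ x -> kQ y -> kQ (x - y).
Proof.
move=> hx /kQ_pmx ->; apply: kQ_add => //.
by rewrite pmx_opp -!polyCN; exact: kQ_pmxC.
Qed.

Lemma kQ0 : kQ (0 : M). Proof. by rewrite -pmx0 -polyC0; exact: kQ_pmxC. Qed.
Lemma klinear_on_kQ0 (g : M -> M) : klinear_on_kQ g -> g 0 = 0.
Proof.
move=> hg; have := hg 1 0 0 kQ0 kQ0; rewrite !kscale1 addr0.
by move/(congr1 (fun y => y - g 0)); rewrite subrr addrK.
Qed.

Lemma kQ_e1 : kQ (e1 k). Proof. by rewrite e1E -polyC1 -polyC0; exact: kQ_pmxC. Qed.
Lemma kQ_e2 : kQ (e2 k). Proof. by rewrite e2E -polyC0; exact: kQ_pmxC. Qed.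
Lemma kQ_e3 : kQ (e3 k). Proof. by rewrite e3E -polyC1 -polyC0; exact: kQ_pmxC. Qed.
Lemma kQ_alpha : kQ (alpha k). Proof. by rewrite alphaE -polyC0; exact: kQ_pmxC. Qed.
Lemma kQ_beta : kQ (beta k). Proof. by rewrite betaE -polyC0; exact: kQ_pmxC. Qed.
Lemma kQ_gamma : kQ (gamma k). Proof. by rewrite gammaE -polyC0; exact: kQ_pmxC. Qed.

Lemma kQ_ind (S : M -> Prop) :
  S 0 -> (forall c x y, S x -> S y -> S (kscale c x + y)) ->
  (forall x y, S x -> S y -> S (x * y)) ->
  S (e1 k) -> S (e2 k) -> S (e3 k) -> S (alpha k) -> S (beta k) -> S (gamma k) ->
  forall x, kQ x -> S x.
Proof.
move=> S0 SL SM S1 S2 S3 Sa Sb Sc.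
have SA x y : S x -> S y -> S (x + y) by move=> Sx Sy; rewrite -(kscale1 x); apply: SL.
have Sp p : S (pmx 0 0 0 p 0 0).
  elim/poly_ind: p => [|p c IH]; first by rewrite pmx0.
  have -> : pmx 0 0 0 (p * 'X + c%:P) 0 0 = kscale c (e2 k) + pmx 0 0 0 p 0 0 * beta k.
    by pmx_ring.
  by apply: SL => //; apply: SM.
have Sq p : S (pmx 0 p 0 0 0 0).
  elim/poly_ind: p => [|p c IH]; first by rewrite pmx0.
  have -> : pmx 0 (p * 'X + c%:P) 0 0 0 0 = kscale c (alpha k) + pmx 0 p 0 0 0 0 * beta k.
    by pmx_ring.
  by apply: SL => //; apply: SM.
have Sr p : S (pmx 0 0 0 0 p 0).
  elim/poly_ind: p => [|p c IH]; first by rewrite pmx0.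
  have -> : pmx 0 0 0 0 (p * 'X + c%:P) 0 = kscale c (gamma k) + beta k * pmx 0 0 0 0 p 0.
    by pmx_ring.
  by apply: SL => //; apply: SM.
have Ss p : S (pmx 0 0 p 0 0 0).
  have -> : pmx 0 0 p 0 0 0 = alpha k * pmx 0 0 0 0 p 0 by pmx_ring.
  exact: SM.
move=> x /kQP [a1 [a3 [q [s [p [r ->]]]]]].
have -> : pmx a1%:P q s p r a3%:P = kscale a1 (e1 k) + (kscale a3 (e3 k) +
    (pmx 0 0 0 p 0 0 + (pmx 0 q 0 0 0 0 + (pmx 0 0 0 0 r 0 + pmx 0 0 s 0 0 0)))).
  by pmx_ring.
by apply: (SL) => //; apply: (SL) => //; do 3 apply: (SA) => //.
Qed.

Lemma ideal_gen_mul (S : M -> Prop) a g b :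
  kQ a -> S g -> kQ b -> ideal_gen S (a * g * b).
Proof.
move=> ha hg hb; exists 1%N, (fun=> a), (fun=> g), (fun=> b).
by split=> [_ | ]; [split | rewrite big_ord1].
Qed.

Lemma ideal_genD (S : M -> Prop) x y :
  ideal_gen S x -> ideal_gen S y -> ideal_gen S (x + y).
Proof.
case=> [N1 [a1 [g1 [b1 [H1 ->]]]]] [N2 [a2 [g2 [b2 [H2 ->]]]]].
pose glue (f1 : 'I_N1 -> M) (f2 : 'I_N2 -> M) j :=
  match split j with inl i => f1 i | inr i => f2 i end.
exists (N1 + N2)%N, (glue a1 a2), (glue g1 g2), (glue b1 b2); split.
  by move=> j; rewrite /glue; case: (split j).
by rewrite big_split_ord /glue; congr (_ + _); apply: eq_bigr => i _;
  rewrite (unsplitK (inl _)) || rewrite (unsplitK (inr _)).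
Qed.

(* The derivation of kQ sending alpha, beta, gamma to alpha u(beta), w(beta)
   and v(beta) gamma. *)
Definition der_uwv (u w v : P) (x : M) : M :=
  pmx 0 (u * x i0 i1 + (x i0 i1)^`() * w)
        (u * x i0 i2 + (x i0 i2)^`() * w + x i0 i2 * v)
        ((x i1 i1)^`() * w) ((x i1 i2)^`() * w + x i1 i2 * v) 0.

Lemma der_uwv_pmx u w v a1 q s p r a3 :
  der_uwv u w v (pmx a1 q s p r a3) =
  pmx 0 (u * q + q^`() * w) (u * s + s^`() * w + s * v) (p^`() * w)
        (r^`() * w + r * v) 0.
Proof. by rewrite /der_uwv !mxE. Qed.

Lemma kQ_der_uwv u w v x : kQ (der_uwv u w v x).
Proof. by rewrite /der_uwv -polyC0; exact: kQ_pmxC. Qed.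

Lemma der_uwv_lin u w v : klinear_on_kQ (der_uwv u w v).
Proof.
move=> c x y _ _; rewrite /der_uwv pmx_scale pmx_add /kscale !mxE.
by congr pmx; rewrite ?derivD ?deriv_mulC; ring.
Qed.

Lemma der_uwv_mul u w v x y : kQ x -> kQ y ->
  der_uwv u w v (x * y) = der_uwv u w v x * y + x * der_uwv u w v y.
Proof.
move=> /kQP [a1 [a3 [q [s [p [r ->]]]]]] /kQP [b1 [b3 [q' [s' [p' [r' ->]]]]]].
rewrite pmx_mul !der_uwv_pmx !pmx_mul pmx_add.
by congr pmx; rewrite ?derivD ?derivM ?derivC; ring.
Qed.

Lemma der_uwv_add u w v u' w' v' x :
  der_uwv (u + u') (w + w') (v + v') x = der_uwv u w v x + der_uwv u' w' v' x.
Proof. by rewrite /der_uwv pmx_add; congr pmx; ring. Qed.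

Lemma der_uwv_sub u w v u' w' v' x :
  der_uwv (u - u') (w - w') (v - v') x = der_uwv u w v x - der_uwv u' w' v' x.
Proof. by rewrite /der_uwv pmx_sub; congr pmx; ring. Qed.

Lemma der_uwv_sum (I : Type) (r : seq I) (c : I -> k) (u w v : I -> P) x :
  \sum_(i <- r) kscale (c i) (der_uwv (u i) (w i) (v i) x) =
  der_uwv (\sum_(i <- r) c i *: u i) (\sum_(i <- r) c i *: w i)
          (\sum_(i <- r) c i *: v i) x.
Proof.
elim: r => [|i r IH]; first by rewrite !big_nil /der_uwv -pmx0; congr pmx; ring.
rewrite !big_cons IH der_uwv_add; congr (_ + _).
by rewrite /der_uwv pmx_scale -!mul_polyC; congr pmx; ring.
Qed.

Lemma der_uwv_e1 u w v : der_uwv u w v (e1 k) = 0.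
Proof. by rewrite e1E der_uwv_pmx -pmx0 !derivC; congr pmx; ring. Qed.
Lemma der_uwv_e2 u w v : der_uwv u w v (e2 k) = 0.
Proof. by rewrite e2E der_uwv_pmx -pmx0 !derivC; congr pmx; ring. Qed.
Lemma der_uwv_e3 u w v : der_uwv u w v (e3 k) = 0.
Proof. by rewrite e3E der_uwv_pmx -pmx0 !derivC; congr pmx; ring. Qed.
Lemma der_uwv_alpha u w v : der_uwv u w v (alpha k) = pmx 0 u 0 0 0 0.
Proof. by rewrite alphaE der_uwv_pmx !derivC; congr pmx; ring. Qed.
Lemma der_uwv_beta u w v : der_uwv u w v (beta k) = pmx 0 0 0 w 0 0.
Proof. by rewrite betaE der_uwv_pmx !derivC derivX; congr pmx; ring. Qed.
Lemma der_uwv_gamma u w v : der_uwv u w v (gamma k) = pmx 0 0 0 0 v 0.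
Proof. by rewrite gammaE der_uwv_pmx !derivC; congr pmx; ring. Qed.

Lemma comm_diag (a1 a3 : k) (mu : P) x : kQ x ->
  pmx a1%:P 0 0 mu 0 a3%:P * x - x * pmx a1%:P 0 0 mu 0 a3%:P =
  der_uwv (a1%:P - mu) 0 (mu - a3%:P) x.
Proof.
by move=> /kQP [b1 [b3 [q [s [p [r ->]]]]]]; rewrite !pmx_mul pmx_sub der_uwv_pmx;
  congr pmx; ring.
Qed.

End PathAlgebra.

Section DerivationsModuloIdeal.
Variable k : fieldType.
Local Notation M := (Mat k).
Variable I : M -> Prop.
Hypothesis I0 : I 0.
Hypothesis IB : forall x y, I x -> I y -> I (x - y).
Hypothesis IZ : forall c x, I x -> I (kscale c x).
Hypothesis IMr : forall x y, I x -> kQ y -> I (x * y).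
Hypothesis IMl : forall x y, I x -> kQ y -> I (y * x).
Hypothesis I_kQ : forall x, I x -> kQ x.

Let ID x y : I x -> I y -> I (x + y).
Proof. by move=> hx /(IB I0) /(IB hx); rewrite sub0r opprK. Qed.

Let I_eq x y : I x -> x = y -> I y.
Proof. by move=> ? <-. Qed.

Definition der_mod (g : M -> M) :=
  forall x y, kQ x -> kQ y -> I (g (x * y) - (g x * y + x * g y)).

Lemma is_inner_ext f g :
  (forall x, kQ x -> f x = g x) -> is_inner I f -> is_inner I g.
Proof. by move=> efg [z [hz H]]; exists z; split=> // x hx; rewrite -efg //; apply: H. Qed.

Lemma is_inner_add f g :
  is_inner I f -> is_inner I g -> is_inner I (fun x => f x + g x).
Proof.
move=> [z [hz Hf]] [z' [hz' Hg]]; exists (z + z'); split; first exact: kQ_add.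
move=> x hx; apply: I_eq (ID (Hf x hx) (Hg x hx)) _.
have -> : (z + z') * x - x * (z + z') = (z * x - x * z) + (z' * x - x * z').
  by rewrite mulrDl mulrDr opprD addrACA.
by rewrite addrACA -opprD.
Qed.

Lemma der_vanishing_on_generators g : klinear_on_kQ g -> der_mod g ->
  I (g (e1 k)) -> I (g (e2 k)) -> I (g (e3 k)) ->
  I (g (alpha k)) -> I (g (beta k)) -> I (g (gamma k)) ->
  forall x, kQ x -> I (g x).
Proof.
move=> hl hd g1 g2 g3 ga gb gc.
suff HS : forall x, kQ x -> kQ x /\ I (g x) by move=> x /HS [].
apply: (@kQ_ind _ (fun x => kQ x /\ I (g x))).
- by split; [exact: kQ0 | rewrite klinear_on_kQ0].
- move=> c x y [hx ix] [hy iy]; split; first exact: kQ_lin.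
  by rewrite hl //; apply: ID => //; apply: IZ.
- move=> x y [hx ix] [hy iy]; split; first exact: kQ_mul.
  by have := ID (hd x y hx hy) (ID (IMr ix hy) (IMl iy hx)); rewrite subrK.
- by split; [exact: kQ_e1 |].
- by split; [exact: kQ_e2 |].
- by split; [exact: kQ_e3 |].
- by split; [exact: kQ_alpha |].
- by split; [exact: kQ_beta |].
- by split; [exact: kQ_gamma |].
Qed.

Lemma der_corner g ea eb t : der_mod g ->
  kQ ea -> kQ eb -> kQ t -> ea * t = t -> t * eb = t ->
  I (g ea) -> I (g eb) -> I (g t - ea * g t * eb).
Proof.
move=> hg ha hb ht eat teb ga gb.
have L1 := hg _ _ ha ht; rewrite eat in L1.
have L2 := hg _ _ ht hb; rewrite teb in L2.
apply: I_eq (ID (ID L1 (IMr ga ht)) (IMl (ID L2 (IMl gb ht)) ha)) _.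
have subDKl (a b c : M) : a - (b + c) + b = a - c by rewrite addrAC addrKA.
have subDKr (a b c : M) : a - (b + c) + c = a - b by rewrite opprD addrA subrK.
rewrite subDKl subDKr.
by rewrite mulrBr !mulrA addrA subrK.
Qed.

Lemma der_sub_comm f z : is_der I f -> kQ z ->
  is_der I (fun x => f x - (z * x - x * z)).
Proof.
case=> hl hk hI hL hz; split.
- move=> c x y hx hy; rewrite hl // /kscale mulrDr mulrDl -scalerAl -scalerAr.
  by rewrite !scale_addrB.
- by move=> x hx; apply: kQ_sub; [exact: hk | apply: kQ_sub; exact: kQ_mul].
- by move=> x hx; apply: IB; [exact: hI | apply: IB; [exact: IMl | exact: IMr]].
- move=> x y hx hy; apply: I_eq (hL x y hx hy) _.
  by rewrite commr_mul leibniz_defectB.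
Qed.

Lemma der_idempotents f : is_der I f -> exists2 z, kQ z &
  [/\ I (f (e1 k) - (z * e1 k - e1 k * z)), I (f (e2 k) - (z * e2 k - e2 k * z))
    & I (f (e3 k) - (z * e3 k - e3 k * z))].
Proof.
case=> hl hk _ hL.
pose z := f (e1 k) * e1 k + f (e2 k) * e2 k + f (e3 k) * e3 k.
have k1 := kQ_e1 k; have k2 := kQ_e2 k; have k3 := kQ_e3 k.
exists z; first by repeat apply: kQ_add; apply: kQ_mul => //; apply: hk.
have [A1 [A3 [Aq [As [Ap [Ar EA]]]]]] := kQP (hk _ k1).
have [B1 [B3 [Bq [Bs [Bp [Br EB]]]]]] := kQP (hk _ k2).
have [C1 [C3 [Cq [Cs [Cp [Cr EC]]]]]] := kQP (hk _ k3).
(* Right-multiplying the Leibniz defect of (e_l, e_i) by e_i and summing over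
   i gives minus the value of f - [z, -] at e_l. *)
have Hl j : kQ j -> I (0 - (
  (f (j * e1 k) - (f j * e1 k + j * f (e1 k))) * e1 k +
  (f (j * e2 k) - (f j * e2 k + j * f (e2 k))) * e2 k +
  (f (j * e3 k) - (f j * e3 k + j * f (e3 k))) * e3 k)).
  by move=> hj; apply: IB => //; repeat apply: ID; apply: IMr => //; apply: hL.
by split; [apply: I_eq (Hl _ k1) _ | apply: I_eq (Hl _ k2) _ | apply: I_eq (Hl _ k3) _];
  rewrite !idempotent_mul /= ?mulr0n ?mulr1n -/(e1 k) -/(e2 k) -/(e3 k)
    (klinear_on_kQ0 hl) /z EA EB EC; pmx_ring.
Qed.

Lemma der_normal_form f : is_der I f -> exists q p r,
  is_inner I (fun x => f x - der_uwv q p r x) /\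
  forall x, I x -> I (der_uwv q p r x).
Proof.
move=> hf; have [z hz [h1 h2 h3]] := der_idempotents hf.
have [hl hk hI hL] := der_sub_comm hf hz.
set h := fun x => f x - (z * x - x * z) in h1 h2 h3 hl hk hI hL.
have k1 := kQ_e1 k; have k2 := kQ_e2 k; have k3 := kQ_e3 k.
(* As h vanishes on the idempotents, its values on the arrows lie in the
   corners e1 kQ e2, e2 kQ e2 and e2 kQ e3 modulo I. *)
have ha := der_corner hL k1 k2 (kQ_alpha k) (e1_alpha k) (alpha_e2 k) h1 h2.
have hb := der_corner hL k2 k2 (kQ_beta k) (e2_beta k) (beta_e2 k) h2 h2.
have hc := der_corner hL k2 k3 (kQ_gamma k) (e2_gamma k) (gamma_e3 k) h2 h3.
have [? [? [q [? [? [? Ea]]]]]] := kQP (hk _ (kQ_alpha k)).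
have [? [? [? [? [p [? Eb]]]]]] := kQP (hk _ (kQ_beta k)).
have [? [? [? [? [? [r Ec]]]]]] := kQP (hk _ (kQ_gamma k)).
rewrite [in X in h (alpha k) - X]Ea in ha; rewrite [in X in h (beta k) - X]Eb in hb.
rewrite [in X in h (gamma k) - X]Ec in hc.
have Hh : forall x, kQ x -> I (h x - der_uwv q p r x).
  apply: der_vanishing_on_generators.
  - move=> c x y hx hy; rewrite hl // der_uwv_lin //; exact: scale_addrB.
  - move=> x y hx hy; apply: I_eq (hL x y hx hy) _.
    by rewrite der_uwv_mul // leibniz_defectB.
  - by rewrite der_uwv_e1 subr0.
  - by rewrite der_uwv_e2 subr0.
  - by rewrite der_uwv_e3 subr0.
  - by apply: I_eq ha _; rewrite der_uwv_alpha; congr (_ - _); pmx_ring.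
  - by apply: I_eq hb _; rewrite der_uwv_beta; congr (_ - _); pmx_ring.
  - by apply: I_eq hc _; rewrite der_uwv_gamma; congr (_ - _); pmx_ring.
exists q, p, r; split.
- by exists z; split=> // x hx; rewrite addrAC; apply: Hh.
- move=> x hx; rewrite -(subKr (h x) (der_uwv q p r x)).
  by apply: IB; [apply: hI | apply: Hh; apply: I_kQ].
Qed.

End DerivationsModuloIdeal.

Section CoordinateIdeal.
Variable k : fieldType.
Local Notation M := (Mat k).
Local Notation P := {poly k}.
Local Notation pmx := (@pmx k).
Variables n n' n'' e : nat.
Hypothesis n'_gt0 : (0 < n')%N.
Hypothesis n''_gt0 : (0 < n'')%N.
Hypothesis n'_le : (n' <= n)%N.
Hypothesis n''_le : (n'' <= n)%N.
Hypothesis e_le' : (e <= n')%N.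
Hypothesis e_le'' : (e <= n'')%N.

Definition Icoord (x : M) : Prop := exists q s p r, x = pmx 0 q s p r 0 /\
  [/\ 'X^n' %| q, 'X^e %| s, 'X^n %| p & 'X^n'' %| r].

Lemma Icoord_pmx a1 q s p r a3 : Icoord (pmx a1 q s p r a3) <->
  [/\ a1 = 0, a3 = 0 & [/\ 'X^n' %| q, 'X^e %| s, 'X^n %| p & 'X^n'' %| r]].
Proof.
split=> [[q' [s' [p' [r' [/pmx_inj [-> -> -> -> [-> ->]] H]]]]] // | [-> -> H]].
by exists q, s, p, r.
Qed.

Lemma Icoord_kQ x : Icoord x -> kQ x.
Proof. by case=> [q [s [p [r [-> _]]]]]; rewrite -polyC0; exact: kQ_pmxC. Qed.

Lemma Icoord0 : Icoord 0.
Proof. by rewrite -pmx0; apply/Icoord_pmx; split=> //; split; apply: dvdp0. Qed.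

Lemma IcoordD x y : Icoord x -> Icoord y -> Icoord (x + y).
Proof.
case=> [q [s [p [r [-> [h1 h2 h3 h4]]]]]] [q' [s' [p' [r' [-> [h1' h2' h3' h4']]]]]].
by rewrite pmx_add addr0; apply/Icoord_pmx; split=> //; split; apply: dvdp_add.
Qed.

Lemma IcoordB x y : Icoord x -> Icoord y -> Icoord (x - y).
Proof.
case=> [q [s [p [r [-> [h1 h2 h3 h4]]]]]] [q' [s' [p' [r' [-> [h1' h2' h3' h4']]]]]].
by rewrite pmx_sub subr0; apply/Icoord_pmx; split=> //; split; apply: dvdp_sub.
Qed.

Lemma IcoordZ c x : Icoord x -> Icoord (kscale c x).
Proof.
case=> [q [s [p [r [-> [h1 h2 h3 h4]]]]]].
by rewrite pmx_scale mulr0; apply/Icoord_pmx; split=> //; split; apply: dvdp_mull.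
Qed.

Lemma IcoordMr x y : Icoord x -> kQ y -> Icoord (x * y).
Proof.
case=> [q [s [p [r [-> [h1 h2 h3 h4]]]]]] /kQP [b1 [b3 [q' [s' [p' [r' ->]]]]]].
rewrite pmx_mul !mul0r !add0r; apply/Icoord_pmx; split=> //; split.
- exact: dvdp_mulr.
- by rewrite dvdp_add ?dvdp_mulr // (dvdXn_leq e_le').
- exact: dvdp_mulr.
- by rewrite dvdp_add ?dvdp_mulr // (dvdXn_leq n''_le).
Qed.

Lemma IcoordMl x y : Icoord x -> kQ y -> Icoord (y * x).
Proof.
case=> [q [s [p [r [-> [h1 h2 h3 h4]]]]]] /kQP [b1 [b3 [q' [s' [p' [r' ->]]]]]].
rewrite pmx_mul !mulr0 !addr0; apply/Icoord_pmx; split=> //; split.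
- by rewrite dvdp_add ?dvdp_mull // (dvdXn_leq n'_le).
- by rewrite dvdp_add ?dvdp_mull // (dvdXn_leq e_le'').
- exact: dvdp_mull.
- exact: dvdp_mull.
Qed.

Lemma I_idealE x : I_ideal n n' n'' (fun v : P => 'X^e %| v) x <-> Icoord x.
Proof.
have n_gt0 : (0 < n)%N := leq_trans n'_gt0 n'_le.
split.
  case=> N [a [g [b [H ->]]]]; elim/big_ind: _ => //; [exact: Icoord0 | exact: IcoordD |].
  move=> j _; have [ha hg hb] := H j; apply: IcoordMr => //; apply: IcoordMl => //.
  case: hg => [-> | -> | -> | [v [hv ->]]];
    rewrite ?alpha_beta_expE ?avgE ?beta_expE // ?gammaE ?pmx_mul;
    by apply/Icoord_pmx; rewrite ?(mulr0, mul0r, addr0, add0r, mulr1) ?dvdpp ?dvdp0.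
case=> [q [s [p [r [-> [/dvdpP [tq ->] /dvdpP [ts ->] /dvdpP [tp ->] /dvdpP [tr ->]]]]]]].
have kQt t : kQ (pmx 0 0 0 t 0 0) by rewrite -polyC0; exact: kQ_pmxC.
have k1 : kQ (1 : M) by rewrite -pmx1 -polyC1 -polyC0; exact: kQ_pmxC.
rewrite (_ : pmx 0 _ _ _ _ 0 =
  1 * (alpha k * beta k ^+ n') * pmx 0 0 0 tq 0 0 + 1 * beta k ^+ n * pmx 0 0 0 tp 0 0 +
  pmx 0 0 0 tr 0 0 * (beta k ^+ n'' * gamma k) * 1 + 1 * avg (ts * 'X^e) * 1); last first.
  by rewrite alpha_beta_expE !beta_expE // avgE -pmx1; pmx_ring.
by repeat apply: ideal_genD; apply: ideal_gen_mul => //; rewrite /gensI;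
  [apply: Or41 | apply: Or42 | apply: Or43 | apply: Or44; exists (ts * 'X^e)];
  rewrite ?dvdp_mulIr.
Qed.

Lemma der_uwv_Icoord u w v x :
  'X %| w \/ [/\ (n%:R : k) = 0, (n'%:R : k) = 0, (n''%:R : k) = 0 & (e%:R : k) = 0] ->
  Icoord x -> Icoord (der_uwv u w v x).
Proof.
move=> hw [q [s [p [r [-> [h1 h2 h3 h4]]]]]]; rewrite der_uwv_pmx.
have [on on' on'' oe] : [/\ 'X %| w \/ (n%:R : k) = 0, 'X %| w \/ (n'%:R : k) = 0,
  'X %| w \/ (n''%:R : k) = 0 & 'X %| w \/ (e%:R : k) = 0].
  by case: hw => [? | []]; [split; left | split; right].
apply/Icoord_pmx; split=> //; split.
- by apply: dvdp_add; [apply: dvdp_mull | apply: dvdXn_deriv_mul].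
- apply: dvdp_add; last exact: dvdp_mulr.
  by apply: dvdp_add; [apply: dvdp_mull | apply: dvdXn_deriv_mul].
- exact: dvdXn_deriv_mul.
- by apply: dvdp_add; [apply: dvdXn_deriv_mul | apply: dvdp_mulr].
Qed.

Lemma der_uwv_Icoord_small u w v x :
  'X^n' %| u -> 'X^n %| w -> 'X^n'' %| v -> Icoord (der_uwv u w v x).
Proof.
move=> hu hw hv; apply/Icoord_pmx; split=> //; split.
- by apply: dvdp_add; [apply: dvdp_mulr | apply/dvdp_mull/(dvdXn_leq n'_le)].
- apply: dvdp_add; last exact/dvdp_mull/(dvdXn_leq e_le'').
  apply: dvdp_add; first exact/dvdp_mulr/(dvdXn_leq e_le').
  exact/dvdp_mull/(dvdXn_leq (leq_trans e_le' n'_le)).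
- exact: dvdp_mull.
- by apply: dvdp_add; [apply/dvdp_mull/(dvdXn_leq n''_le) | apply: dvdp_mull].
Qed.

Lemma der_uwv_is_der u w v :
  'X %| w \/ [/\ (n%:R : k) = 0, (n'%:R : k) = 0, (n''%:R : k) = 0 & (e%:R : k) = 0] ->
  is_der Icoord (der_uwv u w v).
Proof.
move=> hw; split.
- exact: der_uwv_lin.
- by move=> x _; apply: kQ_der_uwv.
- by move=> x; apply: der_uwv_Icoord.
- by move=> x y hx hy; rewrite der_uwv_mul // subrr; apply: Icoord0.
Qed.

Lemma der_uwv_innerP u w v : is_inner Icoord (der_uwv u w v) <->
  'X^n %| w /\ exists c : k, 'X^(minn n' n'') %| u + v - c%:P.
Proof.
split.
  case=> z [/kQP [z1 [z3 [zq [zs [zp [zr ->]]]]]] H].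
  have := H _ (kQ_alpha k); rewrite der_uwv_alpha alphaE !pmx_mul !pmx_sub.
  case/Icoord_pmx => _ _ [hu _ _ _].
  have := H _ (kQ_beta k); rewrite der_uwv_beta betaE !pmx_mul !pmx_sub.
  case/Icoord_pmx => _ _ [_ _ hw _].
  have := H _ (kQ_gamma k); rewrite der_uwv_gamma gammaE !pmx_mul !pmx_sub.
  case/Icoord_pmx => _ _ [_ _ _ hv].
  split; first by apply: (dvdp_eqr hw); ring.
  exists (z1 - z3); rewrite polyCB.
  apply: (dvdp_eqr (dvdp_add (dvdXn_leq (geq_minl n' n'') hu)
                              (dvdXn_leq (geq_minr n' n'') hv))).
  by ring.
case=> hw [c /dvdXn_minn_split [R1 [R2 [hR hR1 hR2]]]].
exists (pmx c%:P 0 0 (v - R2) 0 0%:P); split; first exact: kQ_pmxC.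
move=> x hx; rewrite comm_diag // -der_uwv_sub.
have -> : u = R1 + R2 - v + c%:P by rewrite -hR; ring.
apply: der_uwv_Icoord_small;
  [apply: (dvdp_eqr hR1) | rewrite subr0 | apply: (dvdp_eqr hR2)] => //; ring.
Qed.

Lemma der_uwv_stable_const q p r :
  (forall x, Icoord x -> Icoord (der_uwv q p r x)) ->
  [/\ p`_0 *+ n = 0, p`_0 *+ n' = 0 & p`_0 *+ n'' = 0].
Proof.
move=> hD; have n_gt0 : (0 < n)%N := leq_trans n'_gt0 n'_le.
have IX a b c : Icoord (pmx 0 ('X^n' * a) 0 ('X^n * b) ('X^n'' * c) 0).
  by apply/Icoord_pmx; split=> //; split; rewrite ?dvdp0 ?dvdp_mulIl.
have := hD _ (IX 0 1 0); have := hD _ (IX 1 0 0); have := hD _ (IX 0 0 1).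
rewrite !der_uwv_pmx !(mulr0, mul0r, mulr1, addr0, add0r, deriv0).
move=> /Icoord_pmx [_ _ [_ _ _ hr]] /Icoord_pmx [_ _ [hq _ _ _]] /Icoord_pmx [_ _ [_ _ hp _]].
move: hr hq hp => /dvdXnP hr /dvdXnP hq /dvdXnP hp.
split; rewrite -coef_derivXn_mul //.
- by apply: hp; rewrite ltn_predL.
- by move: (hq n'.-1); rewrite ltn_predL coefD coefMXn ltn_predL n'_gt0 add0r; apply.
- by move: (hr n''.-1); rewrite ltn_predL coefD coefXnM ltn_predL n''_gt0 addr0; apply.
Qed.

End CoordinateIdeal.

Section FirstHochschildCohomology.
Variable k : fieldType.
Local Notation M := (Mat k).
Local Notation P := {poly k}.
Variables n n' n'' d : nat.
Hypothesis n'_gt0 : (0 < n')%N.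
Hypothesis n'_le : (n' <= n)%N.
Hypothesis n''_gt0 : (0 < n'')%N.
Hypothesis n''_le : (n'' <= n)%N.
Local Notation m := (minn n' n'').
Hypothesis d_le : (d <= m)%N.
Local Notation delta := (gcdn (gcdn n n') n'').
Hypothesis delta_dvd : (delta %| d)%N.
Local Notation e := (m - d)%N.
Local Notation c0 := (if (delta%:R : k) == 0 then 1%N else 0%N).
Local Notation a := (n - 1)%N.
Local Notation b := (m - 1)%N.
Local Notation N := (a + b + c0)%N.
Local Notation I := (@Icoord k n n' n'' e).
Local Notation low l := (lshift c0 (lshift b l)).
Local Notation mid l := (lshift c0 (rshift a l)).
Local Notation top t := (rshift (a + b) t).

Let e_le' : (e <= n')%N. Proof. lia. Qed.
Let e_le'' : (e <= n'')%N. Proof. lia. Qed.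

Let IMr : forall x y, I x -> kQ y -> I (x * y) := IcoordMr n''_le e_le'.
Let IMl : forall x y, I x -> kQ y -> I (y * x) := IcoordMl n'_le e_le''.
Let innerP := @der_uwv_innerP k n n' n'' e n'_le n''_le e_le' e_le''.

Lemma delta_char_eq0 : (delta%:R : k) = 0 ->
  [/\ (n%:R : k) = 0, (n'%:R : k) = 0, (n''%:R : k) = 0 & (e%:R : k) = 0].
Proof.
have dvd_eq0 j : (delta %| j)%N -> (delta%:R : k) = 0 -> (j%:R : k) = 0.
  by case/dvdnP=> t -> h; rewrite natrM h mulr0.
move=> h; split; apply: dvd_eq0 h.
- by rewrite (dvdn_trans (dvdn_gcdl _ _)) ?dvdn_gcdl.
- by rewrite (dvdn_trans (dvdn_gcdl _ _)) ?dvdn_gcdr.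
- exact: dvdn_gcdr.
- by rewrite dvdn_sub ?dvdn_gcdn3_minn.
Qed.

Definition hh1_der (i : 'I_N) : M -> M :=
  match split i with
  | inl j => match split j with
             | inl l => der_uwv 0 'X^(l.+1) 0
             | inr l => der_uwv 'X^(l.+1) 0 0
             end
  | inr _ => der_uwv 0 1 0
  end.

Definition hh1_U (c : 'I_N -> k) : P := \sum_(l < b) c (mid l) *: 'X^(l.+1).
Definition hh1_W (c : 'I_N -> k) : P :=
  \sum_(l < a) c (low l) *: 'X^(l.+1) + \sum_(t < c0) c (top t) *: 1.

Lemma hh1_der_low l : hh1_der (low l) = der_uwv 0 'X^(l.+1) 0.
Proof. by rewrite /hh1_der !(unsplitK (inl _)). Qed.

Lemma hh1_der_mid l : hh1_der (mid l) = der_uwv 'X^(l.+1) 0 0.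
Proof. by rewrite /hh1_der (unsplitK (inl _)) (unsplitK (inr _)). Qed.

Lemma hh1_der_top t : hh1_der (top t) = der_uwv 0 1 0.
Proof. by rewrite /hh1_der (unsplitK (inr _)). Qed.

Lemma lincomb_hh1 c x : lincomb c hh1_der x = der_uwv (hh1_U c) (hh1_W c) 0 x.
Proof.
rewrite /lincomb !big_split_ord /=.
under eq_bigr do rewrite hh1_der_low.
under [in X in _ + X + _]eq_bigr do rewrite hh1_der_mid.
under [in X in _ + X]eq_bigr do rewrite hh1_der_top.
rewrite !der_uwv_sum -!der_uwv_add /hh1_U /hh1_W.
have sum0 j (f : 'I_j -> k) : \sum_(i < j) f i *: (0 : P) = 0.
  by rewrite big1 // => i _; rewrite scaler0.
by congr der_uwv; rewrite !sum0 ?add0r ?addr0.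
Qed.

Lemma coef_hh1_W_low c (l : 'I_a) : (hh1_W c)`_l.+1 = c (low l).
Proof.
rewrite coefD coef_sum_XS coef_sum big1 ?addr0 // => t _.
by rewrite coefZ coef1 mulr0.
Qed.

Lemma coef_hh1_W0 c : (hh1_W c)`_0 = \sum_(t < c0) c (top t).
Proof.
rewrite coefD coef0_sum_XS add0r coef_sum.
by apply: eq_bigr => t _; rewrite coefZ coef1 mulr1.
Qed.

Lemma hh1_der_is_der i : is_der I (hh1_der i).
Proof.
elim/ord_add3_ind: i => [l | l | t];
  rewrite ?hh1_der_low ?hh1_der_mid ?hh1_der_top; apply: der_uwv_is_der.
- by left; rewrite exprS dvdp_mulIl.
- by left; apply: dvdp0.
- by right; apply: delta_char_eq0; move: t; case: eqP => // _ [].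
Qed.

Lemma hh1_free c : is_inner I (lincomb c hh1_der) -> forall i, c i = 0.
Proof.
move=> /(is_inner_ext (fun x _ => lincomb_hh1 c x)).
case/innerP => /dvdXnP hW [c' /dvdXnP hU].
apply: ord_add3_ind => [l | l | t].
- by rewrite -coef_hh1_W_low hW //; have := ltn_ord l; lia.
- have := hU l.+1; rewrite addr0 coefB coefC /= subr0 coef_sum_XS; apply.
  by have := ltn_ord l; lia.
- have := hW 0%N; rewrite coef_hh1_W0 (sum_ord_le1 _ t); last by case: eqP.
  by apply; lia.
Qed.

Lemma der_uwv_stable_coef0 q p r :
  (forall x, I x -> I (der_uwv q p r x)) -> p`_0 *+ c0 = p`_0.
Proof.
move=> /(der_uwv_stable_const n'_gt0 n''_gt0 n'_le) [hn hn' hn''].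
have h := mulrn_gcdn_eq0 (mulrn_gcdn_eq0 hn hn') hn''; rewrite -mulr_natr in h.
by move/eqP: h; rewrite mulf_eq0; case/orP => /eqP ->; rewrite ?mul0rn ?eqxx.
Qed.

Definition hh1_coord (w u : P) (i : 'I_N) : k :=
  match split i with
  | inl j => match split j with inl l => w`_l.+1 | inr l => u`_l.+1 end
  | inr _ => w`_0
  end.

Lemma hh1_W_coord (w u : P) : w`_0 *+ c0 = w`_0 -> 'X^n %| w - hh1_W (hh1_coord w u).
Proof.
move=> w0; apply/dvdXnP => -[_ | i hi].
  rewrite coefB coef_hh1_W0 (eq_bigr (fun=> w`_0)) => [|t _].
    by rewrite sumr_const card_ord w0 subrr.
  by rewrite /hh1_coord (unsplitK (inr _)).
have hi' : (i < a)%N by lia.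
by rewrite coefB (coef_hh1_W_low _ (Ordinal hi')) /hh1_coord !(unsplitK (inl _)) subrr.
Qed.

Lemma hh1_U_coord (w u : P) : 'X^m %| u - hh1_U (hh1_coord w u) - (u`_0)%:P.
Proof.
apply/dvdXnP => -[_ | i hi]; rewrite !coefB coefC /=.
  by rewrite /hh1_U coef0_sum_XS subr0 subrr.
have hi' : (i < b)%N by lia.
rewrite /hh1_U (coef_sum_XS _ (Ordinal hi')) /hh1_coord.
by rewrite (unsplitK (inl _)) (unsplitK (inr _)) subrr subr0.
Qed.

Lemma hh1_span f : is_der I f ->
  exists c, is_inner I (fun x => f x - lincomb c hh1_der x).
Proof.
case/(der_normal_form (Icoord0 _ _ _ _ _) (@IcoordB _ _ _ _ _) (@IcoordZ _ _ _ _ _)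
  IMr IMl (@Icoord_kQ _ _ _ _ _)) => q [p [r [Hf Hst]]].
pose c := hh1_coord p (q + r); exists c.
apply: (is_inner_ext _ (is_inner_add (Icoord0 _ _ _ _ _) (@IcoordB _ _ _ _ _) Hf
  (_ : is_inner I (der_uwv (q - hh1_U c) (p - hh1_W c) (r - 0))))).
  by move=> x _; rewrite lincomb_hh1 der_uwv_sub addrA subrK.
apply/innerP; split; first exact/hh1_W_coord/(der_uwv_stable_coef0 Hst).
by exists (q + r)`_0; apply: (dvdp_eqr (hh1_U_coord p (q + r))); ring.
Qed.

Lemma dimHH1_hh1 : dimHH1 I N.
Proof.
by exists hh1_der; split; [exact: hh1_der_is_der | exact: hh1_free | exact: hh1_span].
Qed.

End FirstHochschildCohomology.

Unset Implicit Arguments.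

Theorem mainTheorem8 (k : fieldType) (n n' n'' d : nat) :
  (2 <= n)%N -> (1 <= n')%N -> (n' <= n)%N -> (1 <= n'')%N -> (n'' <= n)%N ->
  let m := minn n' n'' in
  (d <= m)%N ->
  let V := fun v : {poly k} => 'X ^+ (m - d) %| v in
  let delta := gcdn (gcdn n n') n'' in
  (delta %| d)%N ->
  let c := if (delta%:R : k) == 0 then 1%N else 0%N in
  let I := I_ideal n n' n'' V in
  dimHH1 I ((n - 1) + (m - 1) + c)%N /\ (0 < (n - 1) + (m - 1) + c)%N /\
  (m = 1%N -> dimHH1 I (n - 1)%N).
Proof.
move=> n_ge2 n'_gt0 n'_le n''_gt0 n''_le m d_le V delta delta_dvd c I.
have -> : I = Icoord n n' n'' (m - d).
  apply: functional_extensionality => x; apply: propositional_extensionality.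
  by apply: I_idealE; rewrite /m; lia.
have dimN := dimHH1_hh1 k n'_gt0 n'_le n''_gt0 n''_le d_le delta_dvd.
split=> //; split=> [|m1]; first by lia.
have c0 : c = 0%N.
  have := dvdn_gcdn3_minn n n' n''.
  by rewrite -/m -/delta m1 dvdn1 /c => /eqP ->; rewrite oner_eq0.
by move: dimN; rewrite -/m -/delta -/c c0 m1 !addn0.
Qed.
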